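(* Let $\Sigma$ be an alphabet with $|\Sigma|=m$, and let $\pi_1,\pi_2,\pi_3$ be three strings, each a permutation of the symbols of $\Sigma$ (each symbol appears exactly once). Then $$|\mathrm{lcs}(\pi_1,\pi_2)|\cdot|\mathrm{lcs}(\pi_2,\pi_3)|\cdot|\mathrm{lcs}(\pi_3,\pi_1)|\ge m.$$
   Context: $\mathrm{lcs}(x,y)$ denotes a longest common subsequence of strings $x$ and $y$. *)

From mathcomp Require Import all_boot.
Set Implicit Arguments. Unset Strict Implicit. Unset Printing Implicit Defensive.

(* Every subsequence of s
   is of the form mask b s with b a bit-mask of length size s, so this max
   ranges over a finite type. *)
Definition lcs_len (T : eqType) (s t : seq T) : nat :=
  \max_(b : (size s).-tuple bool | subseq (mask b s) t) size (mask b s).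

Definition is_perm_string (T : finType) (s : seq T) : Prop :=
  perm_eq s (enum T).

From mathcomp Require Import all_boot.
Set Implicit Arguments. Unset Strict Implicit. Unset Printing Implicit Defensive.

(* An Erdős–Szekeres argument.  For rankings i, j of the alphabet (positions
   in two of the strings) let chain_len i j x be the size of a largest set S on
   which i and j induce the same order and whose i-largest element is x; read
   along either string, S is a common subsequence, so chain_len i j x is at
   most their lcs.  If i and j order x and y alike, a chain ending at the
   smaller one extends by the larger one, so their chain lengths differ.  For
   x <> y, two of the three cyclically consecutive pairs of strings (p1, p2),
   (p2, p3), (p3, p1) order x and y alike, so the triple of chain lengths is
   an injection of the alphabet into a box of volume
   lcs(p1, p2) lcs(p2, p3) lcs(p3, p1). *)

Section Chains.

Variables (T : finType) (i j : T -> nat).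

Definition order_agree (S : {set T}) : bool :=
  [forall u in S, forall v in S, (i u < i v) == (j u < j v)].

Lemma order_agreeP (S : {set T}) :
  reflect {in S &, forall u v, (i u < i v) = (j u < j v)} (order_agree S).
Proof.
apply: (iffP forall_inP) => [agS u v uS vS | agS u uS].
  by have /forall_inP/(_ v vS)/eqP := agS u uS.
by apply/forall_inP => v vS; rewrite agS.
Qed.

Definition chain_to (x : T) (S : {set T}) : bool :=
  [&& x \in S, order_agree S & [forall u in S, i u <= i x]].

Definition chain_len (x : T) : nat := \max_(S | chain_to x S) #|S|.

Lemma chain_to1 x : chain_to x [set x].
Proof.
rewrite /chain_to set11 /=; apply/andP; split.
  by apply/order_agreeP => u v /set1P-> /set1P->; rewrite !ltnn.
by apply/forall_inP => u /set1P->.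
Qed.

Lemma chain_len_gt0 x : 0 < chain_len x.
Proof. by apply: (bigmax_sup _ (chain_to1 x)); rewrite cards1. Qed.

Lemma chain_lenP x : exists2 S, chain_to x S & #|S| = chain_len x.
Proof.
have [|S chS maxS] := eq_bigmax_cond (fun S : {set T} => #|S|) (A := chain_to x).
  by apply/card_gt0P; exists [set x]; apply: chain_to1.
by exists S.
Qed.

Lemma chain_len_lt x y :
  i x < i y -> j x < j y -> chain_len x < chain_len y.
Proof.
move=> ixy jxy; have [S /and3P[xS /order_agreeP agS /forall_inP iS] <-] := chain_lenP x.
have jS u : u \in S -> j u <= j x.
  by move=> uS; rewrite leqNgt -agS // -leqNgt iS.
have yS : y \notin S by apply: contraL ixy => /iS; rewrite leqNgt.
have chyS : chain_to y (y |: S).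
  rewrite /chain_to setU11 /=; apply/andP; split; last first.
    by apply/forall_inP => u /setU1P[-> // | /iS iux]; apply: leq_trans iux (ltnW ixy).
  apply/order_agreeP => u v /setU1P[-> | uS] /setU1P[-> | vS]; first by rewrite !ltnn.
  - by rewrite !ltnNge (leq_trans (iS v vS) (ltnW ixy)) (leq_trans (jS v vS) (ltnW jxy)).
  - by rewrite (leq_ltn_trans (iS u uS) ixy) (leq_ltn_trans (jS u uS) jxy).
  - exact: agS.
by apply: (bigmax_sup _ chyS); rewrite cardsU1 yS.
Qed.

Lemma chain_len_neq x y : injective i -> injective j -> x != y ->
  (i x < i y) = (j x < j y) -> chain_len x != chain_len y.
Proof.
move=> inj_i inj_j neq_xy agxy.
have [ixy | iyx | /inj_i eq_xy] := ltngtP (i x) (i y); last by rewrite eq_xy eqxx in neq_xy.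
- by rewrite neq_ltn chain_len_lt // -agxy.
- have jyx : j y < j x.
    rewrite ltn_neqAle leqNgt -agxy ltnNge (ltnW iyx) andbT.
    by apply: contra neq_xy => /eqP/inj_j->.
  by rewrite neq_ltn (chain_len_lt iyx jyx) orbT.
Qed.

End Chains.

Lemma chain_len3_inj (T : finType) (i1 i2 i3 : T -> nat) :
  injective i1 -> injective i2 -> injective i3 ->
  injective (fun x => (chain_len i1 i2 x, chain_len i2 i3 x, chain_len i3 i1 x)).
Proof.
move=> inj1 inj2 inj3 x y [e12 e23 e31]; apply/eqP; apply: contraT => neq_xy.
have cyclic_pair_agree (b1 b2 b3 : bool) : [|| b1 == b2, b2 == b3 | b3 == b1].
  by case: b1; case: b2; case: b3.
case/or3P: (cyclic_pair_agree (i1 x < i1 y) (i2 x < i2 y) (i3 x < i3 y)) => /eqP ag.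
- by have := chain_len_neq inj1 inj2 neq_xy ag; rewrite e12 eqxx.
- by have := chain_len_neq inj2 inj3 neq_xy ag; rewrite e23 eqxx.
- by have := chain_len_neq inj3 inj1 neq_xy ag; rewrite e31 eqxx.
Qed.

Lemma card_le_mul3 (T : finType) (f g h : T -> nat) (a b c : nat) :
  (forall x, 0 < f x <= a) -> (forall x, 0 < g x <= b) ->
  (forall x, 0 < h x <= c) ->
  injective (fun x => (f x, g x, h x)) -> #|T| <= a * b * c.
Proof.
move=> fa gb hc inj_fgh.
have shift (k : T -> nat) n : (forall x, 0 < k x <= n) -> forall x, (k x).-1 < n.
  by move=> kn x; case/andP: (kn x) => /prednK-> .
pose box x := (Ordinal (shift _ _ fa x), Ordinal (shift _ _ gb x), Ordinal (shift _ _ hc x)).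
rewrite -[a]card_ord -[b]card_ord -[c]card_ord -!card_prod.
apply: (@leq_card _ _ box) => x y [ef eg eh]; apply: inj_fgh.
have pred_inj (k : T -> nat) n (kn : forall x, 0 < k x <= n) :
    (k x).-1 = (k y).-1 -> k x = k y.
  by case/andP: (kn x) => kx _ e; rewrite -(prednK kx) e prednK //; case/andP: (kn y).
by rewrite (pred_inj _ _ fa ef) (pred_inj _ _ gb eg) (pred_inj _ _ hc eh).
Qed.

Lemma common_subseq_le_lcs (T : eqType) (s p q : seq T) :
  subseq s p -> subseq s q -> size s <= lcs_len p q.
Proof.
case/subseqP=> m size_m ->; have size_m' : size m == size p by rewrite size_m.
exact: (@leq_bigmax_cond _ _ (fun b : (size p).-tuple bool => size (mask b p)) (Tuple size_m')).
Qed.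

Lemma sorted_index (T : eqType) (p : seq T) : uniq p ->
  sorted (fun u v => index u p < index v p) p.
Proof.
move=> Up; case Ep: p => [//|x0 p']; rewrite -Ep.
rewrite -[in X in sorted _ X](mkseq_nth x0 p) /mkseq sorted_map.
apply: (sub_in_sorted (P := gtn (size p))) (iota_ltn_sorted 0 (size p)).
  by move=> k l kp lp; rewrite /relpre /= !index_uniq.
by apply/allP => k; rewrite mem_iota.
Qed.

Section PermStrings.

Variable T : finType.

Lemma index_perm_string_inj (p : seq T) : is_perm_string p -> injective (index^~ p).
Proof.
by move=> Pp x y; apply: (index_inj x); rewrite (perm_mem Pp) mem_enum.
Qed.

Lemma card_order_agree_le_lcs (p q : seq T) (S : {set T}) :
  is_perm_string p -> is_perm_string q ->
  order_agree (index^~ p) (index^~ q) S -> #|S| <= lcs_len p q.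
Proof.
move=> Pp Pq /order_agreeP agS.
have Up : uniq p by rewrite (perm_uniq Pp) enum_uniq.
have Uq : uniq q by rewrite (perm_uniq Pq) enum_uniq.
have lt_index_trans : transitive (fun u v => index u p < index v p).
  by move=> ? ? ?; apply: ltn_trans.
(* Both traces list S by increasing position in p: positions in q compare alike on S. *)
have same_trace : filter (mem S) p = filter (mem S) q.
  apply: (irr_sorted_eq lt_index_trans) => [u | | | u]; first exact: ltnn.
  - exact: sorted_filter (sorted_index Up).
  - apply: (sub_in_sorted (P := mem S) (e := fun u v => index u q < index v q)).
    + by move=> u v uS vS; rewrite /= agS.
    + by apply/allP => u; rewrite mem_filter => /andP[].
    + by apply: sorted_filter (sorted_index Uq) => ? ? ?; apply: ltn_trans.
  by rewrite !mem_filter (perm_mem Pp) (perm_mem Pq).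
have -> : #|S| = size (filter (mem S) q).
  by rewrite size_filter (permP Pq) cardE -size_filter enumT.
by apply: common_subseq_le_lcs (filter_subseq _ _); rewrite -same_trace filter_subseq.
Qed.

Lemma chain_len_le_lcs (p q : seq T) x :
  is_perm_string p -> is_perm_string q ->
  chain_len (index^~ p) (index^~ q) x <= lcs_len p q.
Proof.
move=> Pp Pq; have [S /and3P[_ agS _] <-] := chain_lenP (index^~ p) (index^~ q) x.
exact: card_order_agree_le_lcs.
Qed.

End PermStrings.

Theorem mainTheorem4 (Sigma : finType) (m : nat) (p1 p2 p3 : seq Sigma) :
  #|Sigma| = m ->
  is_perm_string p1 -> is_perm_string p2 -> is_perm_string p3 ->
  lcs_len p1 p2 * lcs_len p2 p3 * lcs_len p3 p1 >= m.
Proof.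
move=> <- P1 P2 P3.
apply: card_le_mul3 (chain_len3_inj (index_perm_string_inj P1)
  (index_perm_string_inj P2) (index_perm_string_inj P3)) => x;
  by rewrite chain_len_gt0 chain_len_le_lcs.
Qed.
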